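(* For integers $k\ge0$ put $\zeta(-k|z)=-\frac{B_{k+1}(z)}{k+1}$, and for $r\ge2$ and integers $k_1,\ldots,k_r\ge0$ define recursively \[ \zeta(-k_1,\ldots,-k_r|z)=-\frac{1}{k_r+1}\zeta(-k_1,\ldots,-k_{r-2},-k_{r-1}-k_r-1|z)-\frac12\zeta(-k_1,\ldots,-k_{r-2},-k_{r-1}-k_r|z) \] \[ +\sum_{q=1}^{k_r}(-k_r)_q\frac{B_{q+1}}{(q+1)!}\zeta(-k_1,\ldots,-k_{r-2},-k_{r-1}-k_r+q|z), \] and let the depth-zero value be $1$. Then, up to addition of a function of period $1$, these are the solutions of the system of difference equations \[ V(-k_1,\ldots,-k_r|z+1)-V(-k_1,\ldots,-k_r|z)=-z^{k_1}V(-k_2,\ldots,-k_r|z+1)\qquad(r\ge1,\ k_j\ge0); \] that is, the polynomials $\zeta(-k_1,\ldots,-k_r|z)$ satisfy this system, and for each fixed tuple any solution $V(-k_1,\ldots,-k_r|z)$ of the equation with right-hand side $-z^{k_1}\zeta(-k_2,\ldots,-k_r|z+1)$ differs from $\zeta(-k_1,\ldots,-k_r|z)$ by a function of period $1$.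
   Context: $B_n(z)$ denotes the $n$-th Bernoulli polynomial and $B_n=B_n(0)$ the $n$-th Bernoulli number. $(a)_q=a(a+1)\cdots(a+q-1)$ is the Pochhammer symbol. For $r=2$ the prefix $-k_1,\ldots,-k_{r-2}$ is empty. *)

From mathcomp Require Import all_boot all_order all_algebra.
Set Implicit Arguments. Unset Strict Implicit. Unset Printing Implicit Defensive.
Import Order.TTheory GRing.Theory Num.Theory.
Local Open Scope ring_scope.

Section Bern.
Variable R : numFieldType.

(* bern_seq n = [:: B_0; ...; B_n], with B_0 = 1 and
   sum_{j=0}^{n} C(n+1,j) B_j = 0 for n >= 1 (so B_1 = -1/2). *)
Fixpoint bern_seq (n : nat) : seq R :=
  match n with
  | 0 => [:: 1]
  | m.+1 => let s := bern_seq m in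
      rcons s (- (\sum_(j < m.+1) 'C(m.+2, j)%:R * s`_j) / (m.+2)%:R)
  end.

Definition bernoulli (n : nat) : R := (bern_seq n)`_n.

Definition bernpoly (n : nat) (z : R) : R :=
  \sum_(j < n.+1) 'C(n, j)%:R * bernoulli j * z ^+ (n - j).

Definition poch (a : R) (q : nat) : R := \prod_(i < q) (a + i%:R).

(* zetaF n ks z : the value zeta(-k_1,...,-k_n | z) for ks = [:: k_1; ...; k_n],
   n being the depth (= size ks). *)
Fixpoint zetaF (n : nat) (ks : seq nat) (z : R) {struct n} : R :=
  match n with
  | 0 => 1
  | m.+1 =>
    match m with
    | 0 => - bernpoly (head 0%N ks).+1 z / (head 0%N ks).+1%:R
    | _.+1 =>
      let pre := take (m.-1) ks in
      let a := nth 0%N ks m.-1 in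
      let b := nth 0%N ks m in
      - (b.+1%:R)^-1 * zetaF m (rcons pre (a + b).+1%N) z
      - 2^-1 * zetaF m (rcons pre (a + b)%N) z
      + \sum_(1 <= q < b.+1)
          poch (- b%:R) q * bernoulli q.+1 / (q.+1)`!%:R
            * zetaF m (rcons pre (a + b - q)%N) z
    end
  end.

Definition zeta (ks : seq nat) (z : R) : R := zetaF (size ks) ks z.

End Bern.

From mathcomp Require Import all_boot all_order all_algebra ring zify.
Import Order.TTheory GRing.Theory Num.Theory.
Set Implicit Arguments. Unset Strict Implicit. Unset Printing Implicit Defensive.
Local Open Scope ring_scope.

(* The depth-one case is the difference equation B_{k+1}(z+1) - B_{k+1}(z) = (k+1) z^k
   of the Bernoulli polynomials. The recursion from depth r to depth r+1 is a linear
   operator [zeta_step a b] applied to the function x |-> zeta(..., -x | z) of the merged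
   last argument, so it commutes with the difference z |-> f(z+1) - f(z), and by
   induction everything reduces to depth two, i.e. to [zeta_step] on the monomials z^x.
   There the Pochhammer weights (-b)_q B_{q+1}/(q+1)! become the binomial coefficients of
   B_{b+1}, up to the sign (-1)^(q+1), which is harmless because the odd Bernoulli numbers
   B_3, B_5, ... vanish. Uniqueness holds because two solutions have the same difference. *)

Lemma mul_bin_sub n k i : (i <= k)%N -> (k <= n)%N ->
  ('C(n, k) * 'C(k, i) = 'C(n, i) * 'C(n - i, k - i))%N.
Proof.
move=> le_ik le_kn; have le_in := leq_trans le_ik le_kn.
have fact_pos : (0 < i`! * (k - i)`! * (n - k)`!)%N by rewrite !muln_gt0 !fact_gt0.
apply/eqP; rewrite -(eqn_pmul2r fact_pos); apply/eqP.
have sub_sub : (n - i - (k - i) = n - k)%N by rewrite subnBA // subnK.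
transitivity n`!; first by rewrite -(bin_fact le_kn) -(bin_fact le_ik); ring.
rewrite -(bin_fact le_in) -(@bin_fact (n - i) (k - i)) ?leq_sub2r // sub_sub.
ring.
Qed.

Section Appell.
Variable R : comNzRingType.

Definition appell (c : nat -> R) n (x : R) :=
  \sum_(j < n.+1) 'C(n, j)%:R * c j * x ^+ (n - j).

Lemma appellD c n x y : appell c n (x + y) =
  \sum_(k < n.+1) 'C(n, k)%:R * appell c k x * y ^+ (n - k).
Proof.
pose F (k i : nat) := 'C(n, k)%:R * ('C(k, i)%:R * c i * x ^+ (k - i)) * y ^+ (n - k).
transitivity (\sum_(k < n.+1) \sum_(i < n.+1) F k i); last first.
  apply: eq_bigr => k _; rewrite /appell big_distrr big_distrl /=.
  rewrite (big_ord_widen n.+1 (F k) (ltn_ord k)) [RHS]big_mkcond /=.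
  apply: eq_bigr => i _; case: ifP => // /negbT; rewrite -leqNgt => lt_ki.
  by rewrite /F (bin_small lt_ki) !(mul0r, mulr0).
rewrite exchange_big /=; apply: eq_bigr => i _.
have le_in : (i <= n)%N by rewrite -ltnS.
rewrite -(big_mkord xpredT (fun k => F k i)) (@big_cat_nat _ _ _ i) //=; last exact: ltnW.
rewrite [\sum_(0 <= k < i) _]big_nat_cond big1 ?add0r; last first.
  by move=> k /andP[/andP[_ lt_ki] _]; rewrite /F (bin_small lt_ki) !(mul0r, mulr0).
rewrite -[X in index_iota X _](add0n i) big_addn big_mkord subSn //.
rewrite addrC exprDn big_distrr /=; apply: eq_bigr => l _.
have le_l : (l <= n - i)%N by rewrite -ltnS.
have bin_eq : 'C(n, l + i)%:R * 'C(l + i, i)%:R = 'C(n, i)%:R * 'C(n - i, l)%:R :> R.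
  by rewrite -!natrM mul_bin_sub ?addnK //; lia.
rewrite /F addnK -[_ *+ 'C(n - i, l)]mulr_natr (_ : n - (l + i) = n - i - l)%N; last lia.
transitivity ('C(n, l + i)%:R * 'C(l + i, i)%:R * (c i * x ^+ l * y ^+ (n - i - l)));
  by [rewrite bin_eq; ring | ring].
Qed.

End Appell.

Section Bernoulli.
Variable R : numFieldType.
Local Notation B := (bernoulli R).

Lemma size_bern_seq n : size (bern_seq R n) = n.+1.
Proof. by elim: n => //= n IHn; rewrite size_rcons IHn. Qed.

Lemma nth_bern_seq n j : (j <= n)%N -> (bern_seq R n)`_j = B j.
Proof.
elim: n => [|n IHn]; first by rewrite leqn0 => /eqP ->.
rewrite leq_eqVlt => /orP[/eqP -> //|lt_jn].
by rewrite /= nth_rcons size_bern_seq lt_jn IHn.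
Qed.

Lemma bernoulli0 : B 0 = 1. Proof. by []. Qed.

Lemma bernoulliS m :
  B m.+1 = - (\sum_(j < m.+1) 'C(m.+2, j)%:R * B j) / m.+2%:R.
Proof.
rewrite /bernoulli /= nth_rcons size_bern_seq ltnn eqxx.
by congr (- _ / _); apply: eq_bigr => j _; rewrite nth_bern_seq // -ltnS.
Qed.

Lemma bernoulli1 : B 1 = - 2^-1.
Proof. by rewrite bernoulliS big_ord1 bernoulli0 bin0 mulr1 mulNr mul1r. Qed.

Lemma sum_bin_bernoulli n :
  \sum_(j < n.+1) 'C(n, j)%:R * B j = B n + (n == 1%N)%:R.
Proof.
case: n => [|[|m]]; first by rewrite big_ord1 mulr1 addr0.
  by rewrite !big_ord_recr big_ord0 /= bernoulli0 bernoulli1 bin0 binn; field.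
rewrite big_ord_recr /= binn mul1r addr0 big_ord_recr /= binSn bernoulliS.
by rewrite [_%:R * _]mulrC divfK ?pnatr_eq0 // addrN add0r.
Qed.

Lemma bernpolyE n z : bernpoly n z = appell B n z. Proof. by []. Qed.

Lemma bernpoly0 n : bernpoly n 0 = B n.
Proof.
rewrite /bernpoly big_ord_recr /= binn subnn mul1r mulr1 big1 ?add0r // => j _.
by rewrite expr0n subn_eq0 leqNgt ltn_ord mulr0.
Qed.

Lemma bernpoly1 n : bernpoly n 1 = B n + (n == 1%N)%:R.
Proof. by rewrite -sum_bin_bernoulli /bernpoly; apply: eq_bigr => j _; rewrite expr1n mulr1. Qed.

Lemma bernpolyD1 n (z : R) : bernpoly n.+1 (z + 1) - bernpoly n.+1 z = n.+1%:R * z ^+ n.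
Proof.
rewrite [z + 1]addrC bernpolyE appellD.
under eq_bigr => k _ do rewrite -bernpolyE bernpoly1 mulrDr mulrDl.
rewrite big_split /= -/(bernpoly n.+1 z) addrAC subrr add0r.
rewrite !big_ord_recl big1 => [|j _]; last by rewrite mulr0 mul0r.
by rewrite /= mulr0 mul0r add0r bin1 mulr1 subn1 addr0.
Qed.

(* Its vanishing is the symmetry B_j(1 - x) = (-1)^j B_j(x) at x = 0. *)
Let reflection_defect j := (-1) ^+ j * bernpoly j (1 : R) - B j.

Lemma sum_reflection_defect n : \sum_(j < n) 'C(n, j)%:R * reflection_defect j = 0.
Proof.
have sign_sub k : (k <= n)%N -> (-1) ^+ n * (-1) ^+ (n - k) = (-1) ^+ k :> R.
  by move=> le_kn; rewrite -{1}(subnK le_kn) exprD mulrAC -mulrA signrMK.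
have reflect : (-1) ^+ n * B n = \sum_(k < n.+1) 'C(n, k)%:R * ((-1) ^+ k * bernpoly k 1).
  rewrite -bernpoly0 -[X in bernpoly _ X](subrr 1) bernpolyE appellD big_distrr /=.
  apply: eq_bigr => k _; rewrite -bernpolyE -(sign_sub k) ?leq_ord //; ring.
have total : \sum_(k < n.+1) 'C(n, k)%:R * reflection_defect k
    = (-1) ^+ n * B n - (B n + (n == 1%N)%:R).
  rewrite reflect -sum_bin_bernoulli -sumrB.
  by apply: eq_bigr => k _; rewrite /reflection_defect; ring.
move: total; rewrite big_ord_recr /= binn mul1r [reflection_defect n]/reflection_defect bernpoly1.
move/(canRL (addrK _)) ->.
by case: n {reflect sign_sub} => [|[|m]] /=; rewrite ?expr0 ?expr1; ring.
Qed.

Lemma reflection_defect_eq0 k : reflection_defect k = 0.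
Proof.
elim/ltn_ind: k => k IH; have := sum_reflection_defect k.+1.
rewrite big_ord_recr /= big1 ?add0r => [|j _]; last by rewrite IH ?mulr0.
by rewrite binSn => /eqP; rewrite mulf_eq0 pnatr_eq0 /= => /eqP.
Qed.

Lemma sign_bernoulli k : (1 < k)%N -> (-1) ^+ k * B k = B k.
Proof.
move=> lt1k; have /eqP := reflection_defect_eq0 k.
by rewrite /reflection_defect bernpoly1 (gtn_eqF lt1k) addr0 subr_eq0 => /eqP.
Qed.

Lemma poch_opp_nat b q : (q <= b)%N -> poch (- b%:R : R) q = (-1) ^+ q * (b ^_ q)%:R.
Proof.
elim: q => [|q IHq] le_qb; first by rewrite /poch big_ord0 mul1r.
rewrite /poch big_ord_recr /= -/(poch _ _) IHq ?(ltnW le_qb) //.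
by rewrite ffactnSr natrM natrB ?(ltnW le_qb) // exprS; ring.
Qed.

Lemma poch_bernoulli_coef b q : (0 < q <= b)%N ->
  poch (- b%:R) q * B q.+1 / q.+1`!%:R = - ('C(b.+1, q.+1)%:R * B q.+1) / b.+1%:R.
Proof.
case/andP=> q_gt0 le_qb; rewrite poch_opp_nat // -[in RHS](sign_bernoulli (k := q.+1)) //.
have binE : 'C(b.+1, q.+1)%:R = b.+1%:R * (b ^_ q)%:R / q.+1`!%:R :> R.
  by rewrite -natrM -ffactSS -bin_ffact natrM mulfK // pnatr_eq0 -lt0n fact_gt0.
rewrite binE exprS; field.
by rewrite addrC natr1 !pnatr_eq0 /= -lt0n fact_gt0.
Qed.

Lemma bernpolyS_expand n (z : R) : bernpoly n.+1 z =
  z ^+ n.+1 - 2^-1 * n.+1%:R * z ^+ n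
  + \sum_(1 <= q < n.+1) 'C(n.+1, q.+1)%:R * B q.+1 * z ^+ (n - q).
Proof.
rewrite /bernpoly !big_ord_recl big_add1 big_mkord /= bernoulli0 bernoulli1 bin0 bin1.
rewrite !subn0 subSS subn0 /bump /=.
by under eq_bigr do rewrite subSS; ring.
Qed.
End Bernoulli.

Section Zeta.
Variable R : numFieldType.
Local Notation B := (bernoulli R).

Definition zeta_step a b (F : nat -> R) : R :=
  - (b.+1%:R)^-1 * F (a + b).+1%N - 2^-1 * F (a + b)%N
  + \sum_(1 <= q < b.+1) poch (- b%:R) q * B q.+1 / q.+1`!%:R * F (a + b - q)%N.

Lemma eq_zeta_step a b F G : F =1 G -> zeta_step a b F = zeta_step a b G.
Proof. by move=> eqFG; rewrite /zeta_step !eqFG; under eq_bigr do rewrite eqFG. Qed.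

Lemma zeta_stepB a b F G :
  zeta_step a b (fun x => F x - G x) = zeta_step a b F - zeta_step a b G.
Proof. by rewrite /zeta_step; under eq_bigr do rewrite mulrBr; rewrite sumrB; ring. Qed.

Lemma zeta_stepZ a b c F : zeta_step a b (fun x => c * F x) = c * zeta_step a b F.
Proof. by rewrite /zeta_step; under eq_bigr do rewrite mulrCA; rewrite -big_distrr /=; ring. Qed.

Lemma zeta_step_exp a b (z : R) :
  zeta_step a b (fun x => z ^+ x) = - z ^+ a * bernpoly b.+1 (z + 1) / b.+1%:R.
Proof.
have sum_eq : \sum_(1 <= q < b.+1) poch (- b%:R) q * B q.+1 / q.+1`!%:R * z ^+ (a + b - q)
    = - z ^+ a * (\sum_(1 <= q < b.+1) 'C(b.+1, q.+1)%:R * B q.+1 * z ^+ (b - q)) / b.+1%:R.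
  rewrite big_distrr big_distrl /=; apply: eq_big_nat => q /andP[q_gt0 lt_qb].
  rewrite poch_bernoulli_coef ?q_gt0 // -addnBA ?(ltnW lt_qb) // exprD; ring.
have -> : bernpoly b.+1 (z + 1) = bernpoly b.+1 z + b.+1%:R * z ^+ b.
  by rewrite -bernpolyD1 subrKC.
rewrite bernpolyS_expand /zeta_step /= sum_eq -addnS !exprD !exprS; field.
by rewrite addrC natr1 pnatr_eq0.
Qed.

Lemma zetaF1 k ks (z : R) : zetaF 1 (k :: ks) z = - bernpoly k.+1 z / k.+1%:R.
Proof. by []. Qed.

Lemma zetaF_SS m ks (z : R) : zetaF m.+2 ks z =
  zeta_step (nth 0%N ks m) (nth 0%N ks m.+1) (fun x => zetaF m.+1 (rcons (take m ks) x) z).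
Proof. by []. Qed.

Lemma zetaF_diff n ks k1 (z : R) : size ks = n ->
  zetaF n.+1 (k1 :: ks) (z + 1) - zetaF n.+1 (k1 :: ks) z = - z ^+ k1 * zetaF n ks (z + 1).
Proof.
elim: n ks k1 z => [|n IHn] ks k1 z size_ks.
  rewrite mulr1 !zetaF1 -mulrBl opprK addrC -opprB bernpolyD1 mulNr mulrAC divff ?mul1r //.
  by rewrite pnatr_eq0.
rewrite !zetaF_SS -zeta_stepB.
case: n IHn size_ks => [|m] IHn size_ks.
  case: ks size_ks => [|b []] // _.
  rewrite (@eq_zeta_step _ _ _ (fun x => -1 * z ^+ x)) => [|x]; last first.
    by rewrite IHn // mulr1 mulN1r.
  by rewrite zeta_stepZ zeta_step_exp zetaF1 /=; ring.
rewrite (@eq_zeta_step _ _ _ (fun x => - z ^+ k1 * zetaF m.+1 (rcons (take m ks) x) (z + 1))).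
  by rewrite zeta_stepZ zetaF_SS.
by move=> x; apply: IHn; rewrite size_rcons size_take size_ks ltnS leqnSn.
Qed.

Lemma zeta_cons_diff k1 ks (z : R) :
  zeta (k1 :: ks) (z + 1) - zeta (k1 :: ks) z = - z ^+ k1 * zeta ks (z + 1).
Proof. exact: zetaF_diff. Qed.

End Zeta.

Lemma eq_diff_periodic (D : pzRingType) (M : zmodType) (V W : D -> M) :
  (forall z, V (z + 1) - V z = W (z + 1) - W z) ->
  forall z, V (z + 1) - W (z + 1) = V z - W z.
Proof.
by move=> eq_diff z; rewrite -[V (z + 1)](subrKC (V z)) eq_diff addrAC -addrA addKr.
Qed.

Theorem theorem3p1 (R : numFieldType) :
  (forall (k1 : nat) (ks : seq nat) (z : R),
      zeta (k1 :: ks) (z + 1) - zeta (k1 :: ks) z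
      = - z ^+ k1 * zeta ks (z + 1))
  /\
  (forall (k1 : nat) (ks : seq nat) (V : R -> R),
      (forall z : R, V (z + 1) - V z = - z ^+ k1 * zeta ks (z + 1)) ->
      exists p : R -> R,
        (forall z : R, p (z + 1) = p z) /\
        (forall z : R, V z = zeta (k1 :: ks) z + p z)).
Proof.
split=> [|k1 ks V V_diff]; first exact: zeta_cons_diff.
exists (fun z => V z - zeta (k1 :: ks) z); split=> [|z]; last by rewrite subrKC.
by apply: eq_diff_periodic => z; rewrite V_diff zeta_cons_diff.
Qed.
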